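(* Let $G$ be a graph of order $n\ge 9$. If $\tau(G)\le\frac{n}{2}$ and ${\rm diam}(G)=2$, then $\beta_p(G)\le n-3$.
   Context: All graphs are finite, simple, undirected and connected. Two vertices $u,v$ are twins if $N(u)\setminus\{v\}=N(v)\setminus\{u\}$; the twin number $\tau(G)$ is the maximum cardinality of an equivalence class of the twin relation. For a partition $\Pi=\{S_1,\dots,S_k\}$ of $V(G)$, $r(u|\Pi)=(d(u,S_1),\dots,d(u,S_k))$ with $d(u,S)=\min_{w\in S}d(u,w)$; $\Pi$ is locating if $r(u|\Pi)\ne r(v|\Pi)$ for all distinct $u,v$; $\beta_p(G)$ is the minimum size of a locating partition. *)

From mathcomp Require Import all_boot.
Set Implicit Arguments. Unset Strict Implicit. Unset Printing Implicit Defensive.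

Section Graph.
Variables (T : finType) (e : rel T).

Definition simple_graph := symmetric e /\ irreflexive e.
Definition connected_graph := forall u v : T, connect e u v.

Fixpoint within (k : nat) (u v : T) : bool :=
  if k is k'.+1 then within k' u v || [exists w, within k' u w && e w v]
  else u == v.

(* graph distance: least k with a walk of length <= k (in a connected
   graph some k < #|T| exists; the default #|T| is never reached) *)
Definition dist (u v : T) : nat :=
  find (fun k => within k u v) (iota 0 #|T|).

Definition diam : nat := \max_(u : T) \max_(v : T) dist u v.

Definition nbh (u : T) : {set T} := [set w | e u w].

Definition twins (u v : T) : bool := nbh u :\ v == nbh v :\ u.

Definition twin_number : nat := \max_(u : T) #|[set v | twins u v]|.

Definition dist_set (u : T) (S : {set T}) : nat :=
  \big[minn/#|T|]_(w in S) dist u w.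

Definition locating_partition (P : {set {set T}}) : bool :=
  partition P [set: T] &&
  [forall u, forall v, (u != v) ==>
     [exists S in P, dist_set u S != dist_set v S]].

(* partition dimension: minimum size of a locating partition
   (the partition into singletons is locating, of size #|T|) *)
Definition partition_dim : nat :=
  \big[minn/#|T|]_(P : {set {set T}} | locating_partition P) #|P|.

End Graph.

From mathcomp Require Import all_boot order zify.
Set Implicit Arguments. Unset Strict Implicit. Unset Printing Implicit Defensive.
Import Order.TTheory.

(* Label each vertex of a set W by itself and each vertex outside W by its
   rank among the vertices outside W with the same neighbourhood trace on W.
   The fibres of this labelling form a locating partition: two vertices in a
   common block have different traces, so some singleton {t}, t in W, is at
   distance 1 from exactly one of them.  Hence the partition dimension is at
   most |W| + k when every trace class has at most k elements, and it suffices
   to find W whose trace classes have at most n - |W| - 3 elements.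

   If some vertex t has at least three neighbours and three non-neighbours,
   W = {t} works.  Otherwise every vertex t has a minority set M(t), its
   neighbourhood or its non-neighbourhood, of size at most 2.  Vertices lying
   in no M(t) are pairwise twins, so at least n - tau >= 5 vertices are
   covered.  An exhaustive check over five covered vertices yields three of
   them, U, each lying in M(t) for some t outside U; for W such a choice of
   sources, every trace class lies in some M(t), t in W, or avoids U. *)

Lemma bigminn_le (I : finType) (P : pred I) (F : I -> nat) x j :
  P j -> \big[minn/x]_(i | P i) F i <= F j.
Proof. exact: (@bigmin_le_cond _ nat). Qed.

Lemma bigminn_geP (I : finType) (P : pred I) (F : I -> nat) x m :
  reflect (m <= x /\ forall i, P i -> m <= F i) (m <= \big[minn/x]_(i | P i) F i).
Proof. exact: (@bigmin_geP _ nat). Qed.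

Section Distances.
Variables (T : finType) (e : rel T).
Hypotheses (eirr : irreflexive e) (card_T : 1 < #|T|).

Lemma dist_eq0 u v : (dist e u v == 0) = (u == v).
Proof.
rewrite /dist; have -> : #|T| = (#|T| - 2).+2 by lia.
by rewrite /=; case: (u == v).
Qed.

Lemma dist_eq1 u v : (dist e u v == 1) = e u v.
Proof.
rewrite /dist; have -> : #|T| = (#|T| - 2).+2 by lia.
rewrite /=; case: (eqVneq u v) => [-> | _] /=; first by rewrite eirr.
have -> : [exists w, (u == w) && e w v] = e u v.
  by apply/existsP/idP => [[w /andP [/eqP -> //]] | uv]; exists u; rewrite eqxx.
by case: (e u v).
Qed.

Lemma dist_set_eq0 u (S : {set T}) : (dist_set e u S == 0) = (u \in S).
Proof.
apply/idP/idP => [|uS]; last first.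
  by rewrite -leqn0 (leq_trans (bigminn_le _ _ uS)) // leqn0 dist_eq0.
apply: contraLR => uS; rewrite -lt0n; apply/bigminn_geP; split; first lia.
by move=> w wS; rewrite lt0n dist_eq0; apply: contraNneq uS => ->.
Qed.

Lemma dist_set1_eq1 u t : (dist_set e u [set t] == 1) = e u t.
Proof.
rewrite /dist_set big_set1E -dist_eq1.
by rewrite /minn; case: ltnP => h; apply/eqP/eqP; lia.
Qed.

End Distances.

Section TracePartition.
Variables (T : finType) (e : rel T) (W : {set T}).
Hypotheses (eirr : irreflexive e) (card_T : 1 < #|T|).

Definition trace u : {set T} := [set t in W | e u t].
Definition trace_class u : {set T} := [set v in ~: W | trace v == trace u].
Definition trace_rank u : nat :=
  #|[set v in trace_class u | enum_rank v < enum_rank u]|.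
Definition trace_label u : T + nat :=
  if u \in W then inl u else inr (trace_rank u).

Lemma trace_classP u v t : t \in W -> v \in trace_class u -> e v t = e u t.
Proof.
by move=> tW; rewrite !inE => /andP [_ /eqP /setP /(_ t)]; rewrite !inE tW.
Qed.

Lemma trace_rank_lt u : u \notin W -> trace_rank u < #|trace_class u|.
Proof.
move=> uW; apply: proper_card; rewrite properEneq setIdE subsetIl andbT.
by apply/eqP => /setP/(_ u); rewrite !inE uW eqxx ltnn.
Qed.

Lemma trace_rank_inj u v : u \notin W -> v \notin W ->
  trace u = trace v -> trace_rank u = trace_rank v -> u = v.
Proof.
wlog lt_uv : u v / enum_rank u < enum_rank v => [hwlog uW vW tr rk|uW vW tr rk].
  case: (ltngtP (enum_rank u) (enum_rank v)) => [lt|gt|/val_inj/enum_rank_inj //].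
    exact: hwlog.
  by apply/esym/hwlog.
have lt_rank : trace_rank u < trace_rank v.
  apply: proper_card; apply/properP; split.
    by apply/subsetP => w; rewrite !inE tr => /andP [-> /ltn_trans ->].
  by exists u; rewrite !inE ?uW ?tr ?eqxx ?lt_uv ?ltnn.
by rewrite rk ltnn in lt_rank.
Qed.

Let P := preim_partition trace_label [set: T].

Lemma mem_trace_block u v : (v \in pblock P u) = (trace_label u == trace_label v).
Proof. by apply: pblock_equivalence_partition => // x y z _ _ _; split=> // /eqP ->. Qed.

Lemma trace_block_in u : pblock P u \in P.
Proof.
have [/eqP cover_P _ _] := and3P (preim_partitionP trace_label [set: T]).
by rewrite pblock_mem ?cover_P.
Qed.

Lemma trace_partition_locating : locating_partition e P.
Proof.
apply/andP; split; first exact: preim_partitionP.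
apply/forallP => u; apply/forallP => v; apply/implyP => neq_uv; apply/exists_inP.
case: (eqVneq (trace_label u) (trace_label v)) => [same | diff]; last first.
  exists (pblock P u); first exact: trace_block_in.
  apply: contra_neq diff => same_dist; apply/eqP.
  rewrite -mem_trace_block -(dist_set_eq0 e) // -same_dist.
  by rewrite dist_set_eq0 // mem_trace_block.
have [uW vW] : u \notin W /\ v \notin W.
  move: same; rewrite /trace_label.
  by case: ifP; case: ifP => // _ _ [uv]; rewrite uv eqxx in neq_uv.
move: same; rewrite /trace_label (negbTE uW) (negbTE vW) => -[same_rank].
have [t /negbTE tuv] : exists t, (t \in trace u) != (t \in trace v).
  apply/existsP; apply: contraNT neq_uv => /existsPn same_trace.
  by apply/eqP/trace_rank_inj => //; apply/setP => t; apply/eqP/negPn.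
have tW : t \in W by move: tuv; rewrite !inE; case: (t \in W).
have block_t : pblock P t = [set t].
  apply/setP => y; rewrite mem_trace_block inE /trace_label tW.
  case: ifP => [_ | yW]; first by rewrite /= eq_sym.
  by apply/esym/negbTE; apply: contraFneq yW => ->.
exists (pblock P t); first exact: trace_block_in.
rewrite block_t; apply: contraFneq tuv => same_dist.
by move: (congr1 (fun d => d == 1) same_dist); rewrite !dist_set1_eq1 // !inE tW => ->.
Qed.

Lemma partition_dim_trace k :
  (forall u, u \notin W -> #|trace_class u| <= k) -> partition_dim e <= #|W| + k.
Proof.
move=> small_classes.
apply: leq_trans (bigminn_le _ _ trace_partition_locating) _.
pose block l := [set y | l == trace_label y].
pose labels := map inl (enum W) ++ map inr (iota 0 k).
have labelsP u : trace_label u \in labels.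
  rewrite /trace_label mem_cat; case: ifP => uW.
    by rewrite map_f ?mem_enum.
  rewrite orbC map_f // mem_iota /=.
  exact: leq_trans (trace_rank_lt (negbT uW)) (small_classes _ (negbT uW)).
have sub : P \subset [set X in map block labels].
  apply/subsetP => _ /imsetP [u _ ->]; rewrite inE.
  by apply/mapP; exists (trace_label u) => //; apply/setP => y; rewrite !inE.
apply: leq_trans (subset_leq_card sub) _.
by rewrite cardsE (leq_trans (card_size _)) // size_map size_cat !size_map size_iota -cardE.
Qed.
End TracePartition.

Definition five : seq nat := iota 0 5.

(* An arc [i -> j] says that [j] lies in the minority set of [i]. *)
Definition minority_arc (sparse : pred nat) (adj : rel nat) : rel nat :=
  fun i j => (i != j) && (adj i j == sparse i).

(* A vertex with no in-arc among the five has its source elsewhere in the graph. *)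
Definition outside_source (arc : rel nat) (U : seq nat) (j : nat) : bool :=
  ~~ has (arc^~ j) five || has (fun i => (i \notin U) && arc i j) five.

Fixpoint bitseqs n : seq bitseq :=
  if n is n'.+1 then [seq true :: s | s <- bitseqs n'] ++ [seq false :: s | s <- bitseqs n']
  else [:: [::]].

Definition triples : seq (seq nat) :=
  [seq U <- [seq mask m five | m <- bitseqs 5] | size U == 3].

Definition five_vertex_claim (arc : rel nat) : bool :=
  all (fun i => count (arc i) five <= 2) five ==>
  has (fun U => all (outside_source arc U) U) triples.

Definition pairs : seq (nat * nat) :=
  [seq p <- [seq (i, j) | i <- five, j <- five] | p.1 < p.2].

Definition edge_rel (E : seq (nat * nat)) : rel nat :=
  fun i j => ((i, j) \in E) || ((j, i) \in E).

(* Memoises [arc] as a table, so that [vm_compute] evaluates each arc once. *)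
Definition tabulate (arc : rel nat) : rel nat :=
  let tab := [seq [seq arc i j | j <- five] | i <- five] in
  fun i j => nth false (nth [::] tab i) j.

Lemma five_vertex_claim_all :
  all (fun c => all (fun m =>
      let arc := minority_arc (nth false c) (edge_rel (mask m pairs)) in
      five_vertex_claim (tabulate arc))
    (bitseqs 10)) (bitseqs 5).
Proof. by vm_compute. Qed.

Lemma mem_bitseqs n s : (s \in bitseqs n) = (size s == n).
Proof.
elim: n s => [|n IHn] [|b s] //=; rewrite mem_cat.
  by apply/negbTE; rewrite negb_or; apply/andP; split; apply/mapP => -[].
have mem_cons b' : (b :: s \in [seq b' :: t | t <- bitseqs n]) = (b == b') && (size s == n).
  apply/mapP/andP => [[t tn [-> ->]] | [/eqP -> sn]]; first by rewrite -IHn.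
  by exists s; rewrite ?IHn.
by rewrite !mem_cons eqSS -andb_orl; case: (b) => /=; rewrite ?orbT.
Qed.

Lemma mem_triples U : U \in triples -> [/\ uniq U, size U = 3 & {subset U <= five}].
Proof.
rewrite mem_filter => /andP [/eqP sz /mapP [m _ defU]]; subst U.
by split; [exact: mask_uniq | | move=> i /mem_mask].
Qed.

Lemma tabulateE arc : {in five &, tabulate arc =2 arc}.
Proof.
move=> i j; rewrite !mem_iota /= => i5 j5.
by rewrite /tabulate (nth_map 0) ?size_iota // (nth_map 0) ?size_iota // !nth_iota.
Qed.

Lemma five_vertex_claim_ext arc arc' :
  {in five &, arc =2 arc'} -> five_vertex_claim arc = five_vertex_claim arc'.
Proof.
move=> arcE; congr (_ ==> _).
  apply: eq_in_all => i i5; congr (_ <= _); apply: eq_in_count => j j5; exact: arcE.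
apply: eq_in_has => U /mem_triples [_ _ U5]; apply: eq_in_all => j /U5 j5.
rewrite /outside_source; congr (~~ _ || _); apply: eq_in_has => i i5; by rewrite arcE.
Qed.

Lemma edge_rel_pairs (adj : rel nat) : symmetric adj ->
  {in five &, forall i j, i != j ->
     edge_rel [seq p <- pairs | adj p.1 p.2] i j = adj i j}.
Proof.
move=> adjC i j i5 j5 ij; rewrite /edge_rel !mem_filter !allpairs_f // !andbT /=.
by case: (ltngtP i j) ij; rewrite ?andbF ?orbF ?andbT // (adjC j).
Qed.

Lemma five_vertex_triple (sparse : pred nat) (adj : rel nat) :
  symmetric adj ->
  {in five, forall i, count (minority_arc sparse adj i) five <= 2} ->
  exists2 U, U \in triples & all (outside_source (minority_arc sparse adj) U) U.
Proof.
move=> adjC outdeg.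
set c := map sparse five; set m := [seq adj p.1 p.2 | p <- pairs].
have arcE : {in five &, tabulate (minority_arc (nth false c) (edge_rel (mask m pairs)))
                        =2 minority_arc sparse adj}.
  move=> i j i5 j5; rewrite tabulateE // /minority_arc /m -filter_mask.
  have lt_i5 : i < 5 by move: i5; rewrite mem_iota.
  by case: eqVneq => //= ij; rewrite edge_rel_pairs // (nth_map 0) ?nth_iota ?size_iota.
have := allP five_vertex_claim_all c; rewrite mem_bitseqs size_map size_iota => /(_ isT).
move=> /allP /(_ m); rewrite mem_bitseqs size_map => /(_ isT) /=.
rewrite (five_vertex_claim_ext arcE) /five_vertex_claim.
by move=> /implyP /(_ (introT allP outdeg)) /hasP.
Qed.

Lemma five_elements (T : finType) (A : {set T}) : 5 <= #|A| ->
  exists2 h : nat -> T, {in five &, injective h} & {in five, forall i, h i \in A}.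
Proof.
move=> A5; have [x0 _] : exists x0, x0 \in A by apply/card_gt0P; lia.
pose hs := take 5 (enum A); have size_hs : size hs = 5 by rewrite size_takel // -cardE.
exists (nth x0 hs) => [i j | i]; rewrite ?mem_iota /= => i5.
  move=> j5 /eqP; rewrite nth_uniq ?size_hs ?take_uniq ?enum_uniq //.
  by move/eqP.
have /mem_take : nth x0 hs i \in hs by rewrite mem_nth ?size_hs.
by rewrite mem_enum.
Qed.

Section MinoritySets.
Variables (T : finType) (e : rel T).
Hypotheses (eS : symmetric e) (eirr : irreflexive e).

Definition nonnbh t : {set T} := [set w | (w != t) && ~~ e t w].
Definition sparse t : bool := #|nbh e t| <= 2.
Definition minority t : {set T} := if sparse t then nbh e t else nonnbh t.

Lemma minority_irr t : t \notin minority t.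
Proof. by rewrite /minority; case: (sparse t); rewrite !inE ?eqxx ?eirr. Qed.

Lemma mem_minority t w : w != t -> (w \in minority t) = (e t w == sparse t).
Proof.
by move=> wt; rewrite /minority; case: (sparse t); rewrite !inE ?wt; case: (e t w).
Qed.

Lemma minority_trace_class (W : {set T}) t u v : t \in W -> u \notin W ->
  v \in trace_class e W u -> (v \in minority t) = (u \in minority t).
Proof.
move=> tW uW vu; have vW : v \notin W by move: vu; rewrite !inE => /andP [].
rewrite !mem_minority ?(eS t) ?(trace_classP tW vu) //.
  by apply: contraNneq uW => ->.
by apply: contraNneq vW => ->.
Qed.

Lemma card_nbh_nonnbh t : #|nbh e t| + #|nonnbh t| = #|T|.-1.
Proof.
rewrite -(cardsC1 t) -(cardsID (nbh e t) [set~ t]); congr (_ + _); apply: eq_card => w.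
  by rewrite !inE; case: eqVneq => // ->; rewrite eirr.
by rewrite !inE andbC.
Qed.

Lemma partition_dim_balanced t :
  2 < #|nbh e t| -> 2 < #|nonnbh t| -> partition_dim e <= #|T| - 3.
Proof.
move=> nbh3 nonnbh3; have card_t := card_nbh_nonnbh t.
have card_T : 1 < #|T| by lia.
apply: leq_trans (partition_dim_trace eirr card_T (W := [set t]) (k := #|T| - 4) _) _;
  last by rewrite cards1; lia.
move=> u uW; have ut : u != t by rewrite inE in uW.
case: (boolP (e u t)) => eut.
  apply: leq_trans (subset_leq_card (_ : _ \subset nbh e t)) _; last by lia.
  by apply/subsetP => v /(trace_classP (set11 t)); rewrite inE eS eut => ->.
apply: leq_trans (subset_leq_card (_ : _ \subset nonnbh t)) _; last by lia.
apply/subsetP => v vu; rewrite inE eS (trace_classP (set11 t) vu) eut andbT.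
by move: vu; rewrite !inE => /andP [].
Qed.

Definition minority_cover : {set T} := \bigcup_t minority t.

Lemma uncovered_twins u v :
  u \notin minority_cover -> v \notin minority_cover -> twins e u v.
Proof.
move=> u_out v_out; apply/eqP/setP => w; rewrite !inE.
case: (eqVneq w u) => [-> | wu]; first by rewrite eirr andbF.
case: (eqVneq w v) => [-> | wv] //=.
have uncovered x : x != w -> x \notin minority_cover -> e x w = ~~ sparse w.
  move=> xw /bigcupP x_out; rewrite eS; have := mem_minority xw.
  case: (boolP (x \in minority w)) => [xin | _]; first by case: x_out; exists w.
  by case: (e w x); case: (sparse w).
by rewrite !uncovered // eq_sym.
Qed.

Lemma card_minority_cover : #|T| <= #|minority_cover| + twin_number e.
Proof.
rewrite -(cardsC minority_cover) leq_add2l.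
have [-> | [u u_out]] := set_0Vmem (~: minority_cover); first by rewrite cards0.
apply: leq_trans (leq_bigmax u); apply: subset_leq_card; apply/subsetP => v v_out.
by rewrite inE uncovered_twins // -in_setC.
Qed.

Section Lopsided.
Hypothesis lopsided : forall t, sparse t \/ #|nonnbh t| <= 2.

Lemma card_minority t : #|minority t| <= 2.
Proof. by rewrite /minority; case: ifP => // /negbT; case: (lopsided t) => [->|]. Qed.

Lemma partition_dim_outside_sources (U : {set T}) :
  9 <= #|T| -> #|U| = 3 -> {in U, forall u, exists2 t, t \notin U & u \in minority t} ->
  partition_dim e <= #|T| - 3.
Proof.
move=> n9 U3 sourced.
pose src u := odflt u [pick t | (t \notin U) && (u \in minority t)].
have srcP u : u \in U -> src u \notin U /\ u \in minority (src u).
  move=> /sourced [t tU ut]; rewrite /src.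
  by case: pickP => [t' /andP [] | /(_ t)] //; rewrite tU ut.
set W := src @: U.
have W3 : #|W| <= 3 by rewrite -U3 leq_imset_card.
have UW : U \subset ~: W.
  apply/subsetP => u uU; rewrite inE; apply/imsetP => -[u' /srcP [u'U _] uu'].
  by rewrite -uu' uU in u'U.
have cardW := cardsC W.
apply: leq_trans (partition_dim_trace eirr _ (W := W) (k := #|~: W| - 3) _) _;
  [lia | | lia].
move=> u uW; case: (boolP [exists t in W, u \in minority t]).
  move=> /exists_inP [t tW ut].
  apply: leq_trans (subset_leq_card (_ : _ \subset minority t)) _.
    by apply/subsetP => v vu; rewrite (minority_trace_class tW uW vu).
  by apply: leq_trans (card_minority t) _; lia.
move=> /exists_inPn u_out.
apply: leq_trans (subset_leq_card (_ : _ \subset ~: W :\: U)) _.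
  apply/subsetP => v vu; have vW : v \in ~: W by move: vu; rewrite inE => /andP [].
  rewrite inE vW andbT; apply/negP => vU; have [_ v_src] := srcP v vU.
  have src_W : src v \in W by rewrite imset_f.
  by move: (u_out _ src_W); rewrite -(minority_trace_class src_W uW vu) v_src.
by rewrite cardsD (setIidPr UW) U3.
Qed.

Lemma sourced_triple : 5 <= #|minority_cover| ->
  exists2 U : {set T}, #|U| = 3 &
    {in U, forall u, exists2 t, t \notin U & u \in minority t}.
Proof.
move=> /five_elements [h h_inj h_cov].
have h_eq : {in five &, forall i j, (h i == h j) = (i == j)}.
  by move=> i j i5 j5; apply/eqP/eqP => [/h_inj -> | ->].
pose adj i j := e (h i) (h j).
have arcE : {in five &, forall i j,
    minority_arc (sparse \o h) adj i j = (h j \in minority (h i))}.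
  move=> i j i5 j5; rewrite /minority_arc -(h_eq i j) //.
  case: eqVneq => [-> | ij] /=; first by rewrite (negbTE (minority_irr _)).
  by rewrite mem_minority // eq_sym.
have outdeg : {in five, forall i, count (minority_arc (sparse \o h) adj i) five <= 2}.
  move=> i i5; rewrite (eq_in_count (a2 := fun j => h j \in minority (h i))); last first.
    by move=> j j5; apply: arcE.
  rewrite -(count_map h (mem (minority (h i)))) -size_filter.
  have uniq_h : uniq (map h five) by rewrite map_inj_in_uniq ?iota_uniq.
  rewrite -(card_uniqP (filter_uniq _ uniq_h)); apply: leq_trans (card_minority (h i)).
  by apply: subset_leq_card; apply/subsetP => x; rewrite mem_filter => /andP [].
have [U0 /mem_triples [uniq_U0 size_U0 U0_five] sourcedU0] :=
  five_vertex_triple (fun i j => eS _ _) outdeg.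
have hU i : i \in five -> (h i \in map h U0) = (i \in U0).
  move=> i5; apply/mapP/idP => [[i' i'U0 /h_inj] | iU0]; last by exists i.
  by move=> -> //; apply: U0_five.
exists [set x in map h U0].
  by rewrite cardsE (card_uniqP _) ?size_map // (map_inj_in_uniq (sub_in2 U0_five h_inj)).
move=> u; rewrite inE => /mapP [j jU0 ->]; have j5 := U0_five j jU0.
have := allP sourcedU0 j jU0; rewrite /outside_source.
case/orP => [/hasPn no_arc | /hasP [i i5 /andP [iU0 arc_ij]]]; last first.
  by exists (h i); rewrite ?inE ?hU // -arcE.
have /bigcupP [t _ jt] := h_cov j j5.
exists t; rewrite // inE; apply/mapP => -[i iU0 ti].
by move: (no_arc i (U0_five i iU0)); rewrite arcE ?U0_five // -ti jt.
Qed.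

End Lopsided.
End MinoritySets.

Theorem proposition13 (T : finType) (e : rel T) :
  simple_graph e -> connected_graph e ->
  9 <= #|T| ->
  2 * twin_number e <= #|T| ->
  diam e = 2 ->
  partition_dim e <= #|T| - 3.
Proof.
move=> [eS eirr] _ n9 twin _.
case: (boolP [exists t, (2 < #|nbh e t|) && (2 < #|nonnbh e t|)]).
  by case/existsP => t /andP []; apply: partition_dim_balanced.
move=> /existsPn balanced_free.
have lopsided t : sparse e t \/ #|nonnbh e t| <= 2.
  by move: (balanced_free t); rewrite negb_and -!leqNgt => /orP.
have cover5 : 5 <= #|minority_cover e| by have := card_minority_cover eS eirr; lia.
have [U U3 sourced] := sourced_triple eS eirr lopsided cover5.
exact: (partition_dim_outside_sources eS eirr lopsided n9 U3 sourced).
Qed.
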